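(* Let $\bm{S}\in\mathbb{R}^{m\times n}$ be $\alpha$-sparse and let $r$ be a positive integer. \begin{enumerate} \item (With replacement.) Let $\bm{R}\in\mathbb{R}^{|I|\times n}$ be the submatrix of $\bm{S}$ formed by $|I|$ rows sampled uniformly with replacement, where $|I|=cr\log(n)$ with $c\geq\frac{16}{3\alpha r}$. Then $\bm{R}$ is $2\alpha$-sparse with probability at least $1-n^{-1}$. Similarly, the submatrix $\bm{C}\in\mathbb{R}^{m\times|J|}$ formed by $|J|=cr\log(m)$ columns of $\bm{S}$ sampled uniformly with replacement is $2\alpha$-sparse with probability at least $1-m^{-1}$. \item (Without replacement.) Let $\bm{R}\in\mathbb{R}^{|I|\times n}$ be the submatrix of $\bm{S}$ formed by $|I|$ rows sampled uniformly without replacement, where $|I|=cr\log(n)$ with $c\geq\frac{8}{\alpha r}$. Then $\bm{R}$ is $2\alpha$-sparse with probability at least $1-2n^{-1}$. Similarly, the submatrix $\bm{C}\in\mathbb{R}^{m\times|J|}$ formed by $|J|=cr\log(m)$ columns of $\bm{S}$ sampled uniformly without replacement is $2\alpha$-sparse with probability at least $1-2m^{-1}$. \end{enumerate}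
   Context: A matrix $\bm{A}\in\mathbb{R}^{p\times q}$ is $\alpha$-sparse if every row of $\bm{A}$ has at most $\alpha q$ nonzero entries and every column has at most $\alpha p$ nonzero entries. $\log$ is the natural logarithm. *)

From HB Require Import structures.
From mathcomp Require Import all_boot all_order all_algebra.
From mathcomp Require Import reals exp.
Set Implicit Arguments. Unset Strict Implicit. Unset Printing Implicit Defensive.
Import Order.TTheory GRing.Theory Num.Theory.
Local Open Scope ring_scope.

Definition sparse (R : numDomainType) (p q : nat) (A : 'M[R]_(p, q)) (alpha : R) : bool :=
  [forall i : 'I_p, #|[set j : 'I_q | A i j != 0]|%:R <= alpha * q%:R]
  && [forall j : 'I_q, #|[set i : 'I_p | A i j != 0]|%:R <= alpha * p%:R].

(* Sampling k row indices uniformly WITH replacement = uniform choice of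
   f : 'I_k -> 'I_m; the sampled submatrix is rowsub f S. *)
Definition prob_rows_wr (R : numFieldType) (m n k : nat) (S : 'M[R]_(m, n))
  (P : 'M[R]_(k, n) -> bool) : R :=
  #|[set f : {ffun 'I_k -> 'I_m} | P (rowsub f S)]|%:R
  / #|[set: {ffun 'I_k -> 'I_m}]|%:R.

Definition prob_cols_wr (R : numFieldType) (m n k : nat) (S : 'M[R]_(m, n))
  (P : 'M[R]_(m, k) -> bool) : R :=
  #|[set f : {ffun 'I_k -> 'I_n} | P (colsub f S)]|%:R
  / #|[set: {ffun 'I_k -> 'I_n}]|%:R.

(* Sampling k indices uniformly WITHOUT replacement = uniform choice of an
   injective f : 'I_k -> 'I_m (ordered sample of distinct indices). *)
Definition prob_rows_wor (R : numFieldType) (m n k : nat) (S : 'M[R]_(m, n))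
  (P : 'M[R]_(k, n) -> bool) : R :=
  #|[set f : {ffun 'I_k -> 'I_m} | injectiveb f && P (rowsub f S)]|%:R
  / #|[set f : {ffun 'I_k -> 'I_m} | injectiveb f]|%:R.

Definition prob_cols_wor (R : numFieldType) (m n k : nat) (S : 'M[R]_(m, n))
  (P : 'M[R]_(m, k) -> bool) : R :=
  #|[set f : {ffun 'I_k -> 'I_n} | injectiveb f && P (colsub f S)]|%:R
  / #|[set f : {ffun 'I_k -> 'I_n} | injectiveb f]|%:R.

From mathcomp Require Import all_boot all_order all_algebra all_fingroup.
From mathcomp Require Import reals exp sequences lra zify.
Set Implicit Arguments. Unset Strict Implicit. Unset Printing Implicit Defensive.
Import Order.TTheory GRing.Theory Num.Theory.

(* Fix a column j of S with support D, so |D| <= alpha m.  A row sample is a map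
   f : 'I_k -> 'I_m (arbitrary with replacement, injective without), and column j
   of the sampled matrix has |f^-1(D)| nonzeros.  Both families of samples are
   negatively dependent: given f(J) within D, f(i) lands in D with probability at
   most |D|/m.  Writing 2^|f^-1(D)| as the number of J within f^-1(D) bounds its
   mean by (1 + |D|/m)^k <= e^(alpha k), so by Markov the column gets more than
   2 alpha k nonzeros with probability at most e^(alpha k) 4^(-alpha k), which is
   at most n^-2 once alpha k >= 16/3 ln n, because 2 ln 2 - 1 >= 3/8.  A union bound
   over the n columns leaves failure probability 1/n (also without replacement);
   rows of the sample are rows of S.  Columns follow by transposition. *)

Lemma expnDn_subsets (T : finType) (a b : nat) :
  (a + b) ^ #|T| = \sum_(J : {set T}) a ^ #|J| * b ^ (#|T| - #|J|).
Proof.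
rewrite -prod_nat_const bigA_distr; apply: eq_bigr => J _.
rewrite (bigID (mem J)) /= -!prod_nat_const.
rewrite (eq_bigr (fun=> a)) => [|i ->] //.
rewrite [X in _ * X](eq_bigr (fun=> b)) => [|i /negbTE -> //].
rewrite prod_nat_const (eq_bigl (fun i => i \in ~: J)) => [|i]; last by rewrite !inE.
by rewrite prod_nat_const -(cardsC J) addKn.
Qed.

Lemma leq_card_bigcup (I T : finType) (B : I -> {set T}) :
  #|\bigcup_i B i| <= \sum_i #|B i|.
Proof.
elim/big_rec2: _ => [|i s U _ IH]; first by rewrite cards0.
exact: leq_trans (leq_card_setU _ _) (leq_add (leqnn _) IH).
Qed.

Section Hits.
Variables k m : nat.
Implicit Types (F : {set {ffun 'I_k -> 'I_m}}) (D : {set 'I_m}) (J : {set 'I_k}).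

Definition card_hits F D J := #|[set f in F | J \subset f @^-1: D]|.

(* [card_hits F D J / #|F|] is the probability that a sample drawn uniformly from F
   maps J into D; negative dependence bounds each conditional step by [|D|/m]. *)
Definition negatively_dependent F := forall D J i0, i0 \notin J ->
  card_hits F D (i0 |: J) * m <= card_hits F D J * #|D|.

Lemma negatively_dependent_all : negatively_dependent [set: {ffun 'I_k -> 'I_m}].
Proof.
move=> D J i0 i0J; rewrite /card_hits.
set A := [set f in _ | J \subset _]; set B := [set f in _ | i0 |: J \subset _].
pose upd (f : {ffun 'I_k -> 'I_m}) y := [ffun i => if i == i0 then y else f i].
pose swap p := (upd p.1 p.2, p.1 i0).
have swapK : involutive swap.
  case=> f y; rewrite /swap /upd /= ffunE eqxx; congr pair.
  by apply/ffunP => i; rewrite !ffunE; case: eqP => // ->.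
have -> : #|B| * m = #|setX B [set: 'I_m]| by rewrite cardsX cardsT card_ord.
rewrite -cardsX -(card_imset _ (inv_inj swapK)).
apply/subset_leq_card/subsetP => _ /imsetP[[f y] /setXP[fB _] ->].
move: fB; rewrite !inE subUset sub1set => /and3P[_ fi0 fJ].
rewrite inE in fi0; rewrite /= fi0 andbT; apply/subsetP => i iJ.
rewrite !inE ffunE; case: eqP => [ii0 | _]; first by rewrite -ii0 iJ in i0J.
by move/subsetP: fJ => /(_ i iJ); rewrite inE.
Qed.

Lemma negatively_dependent_injective :
  negatively_dependent [set f : {ffun 'I_k -> 'I_m} | injectiveb f].
Proof.
move=> D J i0 i0J; rewrite /card_hits.
set I := [set f : {ffun _} | injectiveb f].
set A := [set f in I | J \subset _]; set B := [set f in I | i0 |: J \subset _].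
pose swap (f : {ffun 'I_k -> 'I_m}) y := [ffun i => tperm (f i0) y (f i)].
(* Pairs with [y] in [f @: J] are kept; any other [(f, y)] goes to [f] with the values
   [f i0] and [y] exchanged, paired with [f i0], which then lies outside the image of
   [J].  So [Psi] is an involution injecting [setX B [set: 'I_m]] into [setX A D]. *)
pose Psi (p : {ffun 'I_k -> 'I_m} * 'I_m) :=
  if p.2 \in p.1 @: J then p else (swap p.1 p.2, p.1 i0).
have swap_inj (f : {ffun _}) y : f \in I -> swap f y \in I.
  rewrite !inE => /injectiveP f_inj; apply/injectiveP => i j.
  by rewrite !ffunE => /perm_inj/f_inj.
have swap_J (f : {ffun _}) y : f \in I -> y \notin f @: J -> {in J, swap f y =1 f}.
  rewrite inE => /injectiveP f_inj yJ i iJ; rewrite ffunE; apply: tpermD.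
    by apply: contraNneq i0J => /f_inj ->.
  by apply: contraNneq yJ => ->; exact: imset_f.
have swap_i0 (f : {ffun _}) y : f \in I -> y \notin f @: J -> f i0 \notin swap f y @: J.
  move=> fI yJ; rewrite (eq_in_imset (swap_J f y fI yJ)).
  by move: fI; rewrite inE => /injectiveP f_inj; rewrite mem_imset.
have PsiK : {in setX B [set: 'I_m], involutive Psi}.
  case=> f y /setXP[+ _]; rewrite inE => /andP[fI _].
  have [yJ | yJ] := boolP (y \in f @: J); rewrite /Psi /= ?yJ /= ?yJ //.
  rewrite (negbTE yJ) /= (negbTE (swap_i0 f y fI yJ)) ffunE tpermL.
  by congr pair; apply/ffunP => i; rewrite !ffunE tpermL tpermC tpermK.
have -> : #|B| * m = #|setX B [set: 'I_m]| by rewrite cardsX cardsT card_ord.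
rewrite -cardsX -(card_in_imset (can_in_inj PsiK)).
apply/subset_leq_card/subsetP => _ /imsetP[[f y] /setXP[fB _] ->].
move: fB; rewrite inE subUset sub1set -sub_imset_pre => /andP[fI /andP[fi0 fJ]].
rewrite /Psi /= inE; case: ifPn => yJ /=.
  by rewrite inE fI -sub_imset_pre fJ (subsetP fJ).
rewrite inE swap_inj // -sub_imset_pre (eq_in_imset (swap_J f y fI yJ)) fJ.
by rewrite inE in fi0.
Qed.

Lemma card_hits_le F D J : negatively_dependent F ->
  card_hits F D J * m ^ #|J| <= #|F| * #|D| ^ #|J|.
Proof.
move=> negF; elim: {J}_.+1 {-2}J (ltnSn #|J|) => // n IH J.
have [-> _ | [i0 i0J] Jn] := set_0Vmem J.
  rewrite cards0 !muln1; apply/subset_leq_card/subsetP => f.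
  by rewrite inE => /andP[].
set J' := J :\ i0; have J'n : #|J'| < n by move: Jn; rewrite (cardsD1 i0 J) i0J.
have i0J' : i0 \notin J' by rewrite !inE eqxx.
have := negF D J' i0 i0J'; have := IH J' J'n.
rewrite -(setD1K i0J) -/J' cardsU1 i0J' add1n !expnS; nia.
Qed.

Lemma sum_exp2_card_preim_le F D : negatively_dependent F ->
  (\sum_(f in F) 2 ^ #|f @^-1: D|) * m ^ k <= #|F| * (#|D| + m) ^ k.
Proof.
move=> negF.
have -> : \sum_(f in F) 2 ^ #|f @^-1: D| = \sum_J card_hits F D J.
  have pow2E (f : {ffun 'I_k -> 'I_m}) :
      2 ^ #|f @^-1: D| = \sum_(J : {set 'I_k} | J \subset f @^-1: D) 1.
    by rewrite sum1dep_card -card_powerset; apply: eq_card => J; rewrite powersetE.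
  under eq_bigr do rewrite pow2E.
  rewrite (exchange_big_dep predT) //=; apply: eq_bigr => J _.
  by rewrite sum1_card; apply: eq_card => f; rewrite !inE.
have := expnDn_subsets 'I_k #|D| m; rewrite card_ord => ->.
rewrite big_distrr big_distrl /= leq_sum // => J _.
have Jk : #|J| <= k by rewrite (leq_trans (max_card _)) ?card_ord.
rewrite -{1}(subnK Jk) expnD mulnCA [leqRHS]mulnA [leqRHS]mulnC leq_mul2l.
by rewrite card_hits_le ?orbT.
Qed.
End Hits.

Local Open Scope ring_scope.

Lemma frac_ge_of_card_compl (R : realFieldType) (T : finType) (F : {set T})
    (P : pred T) n :
  (0 < #|F|)%N -> (0 < n)%N -> #|[set x in F | ~~ P x]|%:R * n%:R <= #|F|%:R :> R ->
  1 - n%:R^-1 <= #|[set x in F | P x]|%:R / #|F|%:R :> R.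
Proof.
move=> F_gt0 n_gt0; have [F0 n0] : 0 < #|F|%:R :> R /\ 0 < n%:R :> R by rewrite !ltr0n.
have card_F : #|[set x in F | P x]|%:R + #|[set x in F | ~~ P x]|%:R = #|F|%:R :> R.
  rewrite -natrD -(cardsID [set x | P x] F).
  by congr (_ + _)%:R; apply: eq_card => x; rewrite !inE andbC.
rewrite -ler_pdivlMr // => bad_le; rewrite ler_pdivlMr // mulrBl mul1r.
rewrite mulrC in bad_le; lra.
Qed.

Lemma ln2_ge (R : realType) : 11 / 16 <= ln (2 : R).
Proof.
have sqr_ge (l' l x : R) : l <= x -> 0 <= l -> l' <= l ^+ 2 -> l' <= x ^+ 2.
  move=> lx l0 /le_trans; apply.
  by rewrite ler_pXn2r // nnegrE (le_trans l0 lx).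
(* [expR (- 11/1024) ^+ 64 >= 1/2], via rounded lower bounds on six squarings. *)
pose y : R := expR (- (11 / 1024)).
have y1 : 1013 / 1024 <= y by apply: le_trans (expR_ge1Dx _); lra.
have y2 : (1002 * 1024 + 121) / (1024 * 1024) <= y ^+ 2.
  by apply: (sqr_ge _ _ _ y1); lra.
have y4 : (980 * 1024 + 720) / (1024 * 1024) <= (y ^+ 2) ^+ 2.
  by apply: (sqr_ge _ _ _ y2); lra.
have y8 : (939 * 1024 + 242) / (1024 * 1024) <= ((y ^+ 2) ^+ 2) ^+ 2.
  by apply: (sqr_ge _ _ _ y4); lra.
have y16 : (861 * 1024 + 500) / (1024 * 1024) <= (((y ^+ 2) ^+ 2) ^+ 2) ^+ 2.
  by apply: (sqr_ge _ _ _ y8); lra.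
have y32 : (724 * 1024 + 786) / (1024 * 1024) <= ((((y ^+ 2) ^+ 2) ^+ 2) ^+ 2) ^+ 2.
  by apply: (sqr_ge _ _ _ y16); lra.
have y64 : 1 / 2 <= (((((y ^+ 2) ^+ 2) ^+ 2) ^+ 2) ^+ 2) ^+ 2.
  by apply: (sqr_ge _ _ _ y32); lra.
rewrite -!exprM /y -expRM_natl mulrN expRN div1r in y64.
rewrite (_ : _ * (11 / 1024) = 11 / 16) in y64; last by rewrite !natrM; lra.
rewrite lef_pV2 ?posrE ?expR_gt0 // in y64.
by rewrite -[leLHS]expRK ler_ln ?posrE ?expR_gt0.
Qed.

Lemma sum_exp2_card_preim_le_expR (R : realType) k m
    (F : {set {ffun 'I_k -> 'I_m}}) (D : {set 'I_m}) (a : R) :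
  negatively_dependent F -> (0 < m)%N -> #|D|%:R <= a * m%:R ->
  \sum_(f in F) 2 ^+ #|f @^-1: D| <= #|F|%:R * expR (a * k%:R).
Proof.
move=> negF m_gt0 Da; have m0 : 0 < m%:R :> R by rewrite ltr0n.
have Dm_le : (#|D| + m)%:R / m%:R <= expR a.
  rewrite natrD mulrDl divff ?gt_eqF // addrC; apply: le_trans (expR_ge1Dx _) _.
  by rewrite ler_expR ler_pdivrMr.
under eq_bigr do rewrite -natrX.
have := sum_exp2_card_preim_le D negF; rewrite -(ler_nat R) !natrM natr_sum !natrX.
rewrite -ler_pdivlMr ?exprn_gt0 // -mulrA -expr_div_n => /le_trans; apply.
by rewrite [a * _]mulrC expRM_natl ler_wpM2l // lerXn2r // nnegrE ?divr_ge0 ?expR_ge0.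
Qed.

Lemma card_preim_gt_le (R : realType) k m (F : {set {ffun 'I_k -> 'I_m}})
    (D : {set 'I_m}) (a : R) n :
  negatively_dependent F -> (0 < m)%N -> (0 < n)%N -> 0 < a ->
  #|D|%:R <= a * m%:R -> 16 / 3 * ln n%:R <= a * k%:R ->
  #|[set f in F | 2 * a * k%:R < #|f @^-1: D|%:R]|%:R * n%:R ^+ 2 <= #|F|%:R :> R.
Proof.
move=> negF m_gt0 n_gt0 a_gt0 Da ak.
set s := a * k%:R in ak *; set H := [set f in F | _].
have s_ge0 : 0 <= s by apply: mulr_ge0 (ltW a_gt0) _.
have two_gt0 : (0 : R) < 2 by [].
have markov : #|H|%:R * expR (2 * s * ln 2) <= \sum_(f in F) 2 ^+ #|f @^-1: D|.
  have HF : H \subset F by apply/subsetP => f; rewrite inE => /andP[].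
  rewrite (big_setID H) /= (setIidPr HF) -[leLHS]addr0.
  apply: lerD; last by rewrite sumr_ge0 // => f _; rewrite exprn_ge0.
  rewrite mulr_natl -sumr_const ler_sum // => f; rewrite inE => /andP[_ heavy].
  rewrite -[X in _ <= X ^+ _](lnK two_gt0) -expRM_natl ler_expR.
  apply: ler_wpM2r; last by rewrite /s mulrA ltW.
  by rewrite ltW // ln_gt0 // ltr1n.
have exp_s : n%:R ^+ 2 * expR s <= expR (2 * s * ln 2).
  rewrite -[n%:R]lnK ?posrE ?ltr0n // -expRM_natl -expRD ler_expR.
  have := ln2_ge R; nra.
have := le_trans (ler_wpM2l (ler0n _ _) exp_s) markov.
rewrite mulrA => /le_trans/(_ (sum_exp2_card_preim_le_expR negF m_gt0 Da)).
by rewrite ler_pM2r ?expR_gt0.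
Qed.

Lemma card_not_sparse_rowsub_le (R : realType) m n k (S : 'M[R]_(m, n)) (a : R)
    (F : {set {ffun 'I_k -> 'I_m}}) :
  negatively_dependent F -> (0 < m)%N -> (0 < n)%N -> sparse S a ->
  (0 < a -> 16 / 3 * ln n%:R <= a * k%:R) ->
  #|[set f in F | ~~ sparse (rowsub f S) (2 * a)]|%:R * n%:R <= #|F|%:R :> R.
Proof.
move=> negF m_gt0 n_gt0 /andP[/forallP Srow /forallP Scol] ak.
have [m0 n0] : 0 < m%:R :> R /\ 0 < n%:R :> R by rewrite !ltr0n.
have a_ge0 : 0 <= a.
  by rewrite -(pmulr_lge0 _ n0) (le_trans _ (Srow (Ordinal m_gt0))).
pose supp j := [set i | S i j != 0].
pose heavy j := [set f in F | 2 * a * k%:R < #|f @^-1: supp j|%:R].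
have bad_sub : [set f in F | ~~ sparse (rowsub f S) (2 * a)] \subset \bigcup_j heavy j.
  apply/subsetP => f; rewrite inE negb_and !negb_forall => /andP[fF /orP[]] /existsP[x].
    apply: contraNT => _; rewrite (eq_card (B := [set j | S (f x) j != 0])).
      by rewrite (le_trans (Srow _)) // ler_wpM2r ?ler0n // ler_peMl // ler1n.
    by move=> j; rewrite !inE mxE.
  rewrite -ltNge => heavy_x; apply/bigcupP; exists x => //; rewrite inE fF.
  by rewrite (eq_card (B := [set i | rowsub f S i x != 0])) // => i; rewrite !inE mxE.
have heavy_le j : #|heavy j|%:R * n%:R ^+ 2 <= #|F|%:R :> R.
  have [supp0 | supp_gt0] := posnP #|supp j|.
    suff -> : heavy j = set0 by rewrite cards0 mul0r.
    apply/setP => f; rewrite !inE (cards0_eq supp0) preimset0 cards0 ltNge.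
    by rewrite !mulr_ge0 ?andbF.
  have a_gt0 : 0 < a.
    by rewrite -(pmulr_lgt0 _ m0) (lt_le_trans _ (Scol j)) // ltr0n.
  exact: card_preim_gt_le negF m_gt0 n_gt0 a_gt0 (Scol j) (ak a_gt0).
have := leq_trans (subset_leq_card bad_sub) (leq_card_bigcup heavy).
rewrite -(ler_nat R) natr_sum => /(ler_wpM2r (ltW (exprn_gt0 2 n0))).
rewrite mulr_suml => /le_trans/(_ (ler_sum _ (fun j _ => heavy_le j))).
by rewrite sumr_const card_ord expr2 mulrA -[#|F|%:R *+ n]mulr_natr ler_pM2r.
Qed.

Lemma frac_sparse_rowsub_ge (R : realType) m n k (S : 'M[R]_(m, n)) (a : R)
    (F : {set {ffun 'I_k -> 'I_m}}) :
  negatively_dependent F -> (0 < #|F|)%N -> (0 < m)%N -> (0 < n)%N -> sparse S a ->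
  (0 < a -> 16 / 3 * ln n%:R <= a * k%:R) ->
  1 - n%:R^-1 <= #|[set f in F | sparse (rowsub f S) (2 * a)]|%:R / #|F|%:R :> R.
Proof.
move=> negF F_gt0 m_gt0 n_gt0 Ssp ak; apply: frac_ge_of_card_compl => //.
exact: card_not_sparse_rowsub_le.
Qed.

Lemma prob_rows_wr_sparse_ge (R : realType) m n k (S : 'M[R]_(m, n)) (a : R) :
  (0 < m)%N -> (0 < n)%N -> sparse S a -> (0 < a -> 16 / 3 * ln n%:R <= a * k%:R) ->
  1 - n%:R^-1 <= prob_rows_wr S (fun A : 'M[R]_(k, n) => sparse A (2 * a)).
Proof.
move=> m_gt0 n_gt0 Ssp ak; rewrite /prob_rows_wr.
have -> : [set f : {ffun 'I_k -> 'I_m} | sparse (rowsub f S) (2 * a)]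
    = [set f in [set: {ffun 'I_k -> 'I_m}] | sparse (rowsub f S) (2 * a)].
  by apply/setP => f; rewrite !inE.
have F_gt0 : (0 < #|[set: {ffun 'I_k -> 'I_m}]|)%N.
  by rewrite cardsT card_ffun card_ord expn_gt0 m_gt0.
exact: frac_sparse_rowsub_ge (@negatively_dependent_all k m) F_gt0 m_gt0 n_gt0 Ssp ak.
Qed.

Lemma prob_rows_wor_sparse_ge (R : realType) m n k (S : 'M[R]_(m, n)) (a : R) :
  (k <= m)%N -> (0 < m)%N -> (0 < n)%N -> sparse S a ->
  (0 < a -> 16 / 3 * ln n%:R <= a * k%:R) ->
  1 - n%:R^-1 <= prob_rows_wor S (fun A : 'M[R]_(k, n) => sparse A (2 * a)).
Proof.
move=> km m_gt0 n_gt0 Ssp ak; rewrite /prob_rows_wor.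
have -> : [set f : {ffun 'I_k -> 'I_m} | injectiveb f && sparse (rowsub f S) (2 * a)]
    = [set f in [set f : {ffun 'I_k -> 'I_m} | injectiveb f] | sparse (rowsub f S) (2 * a)].
  by apply/setP => f; rewrite !inE.
apply: frac_sparse_rowsub_ge (@negatively_dependent_injective k m) _ m_gt0 n_gt0 Ssp ak.
by rewrite card_inj_ffuns !card_ord ffact_gt0.
Qed.

Lemma mul_ln_le_sample_size (R : realType) (K alpha c : R) (r n k : nat) :
  0 < alpha -> (0 < r)%N -> (0 < n)%N -> K / (alpha * r%:R) <= c ->
  k%:R = c * r%:R * ln n%:R -> K * ln n%:R <= alpha * k%:R.
Proof.
move=> alpha_gt0 r_gt0 n_gt0 Kc ->.
by rewrite mulrA ler_wpM2r ?ln_ge0 ?ler1n // mulrCA -ler_pdivrMr // mulr_gt0 ?ltr0n.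
Qed.

Lemma sparse_trmx (R : numDomainType) p q (A : 'M[R]_(p, q)) (b : R) :
  sparse A^T b = sparse A b.
Proof.
rewrite /sparse andbC; congr (_ && _); apply: eq_forallb => i;
  by congr (_%:R <= _); apply: eq_card => j; rewrite !inE mxE.
Qed.

Lemma sparse_colsub (R : numDomainType) m n k (S : 'M[R]_(m, n)) (f : 'I_k -> 'I_n) (b : R) :
  sparse (colsub f S) b = sparse (rowsub f S^T) b.
Proof. by rewrite -sparse_trmx trmx_mxsub. Qed.

Lemma prob_cols_wr_sparse (R : numFieldType) m n k (S : 'M[R]_(m, n)) (b : R) :
  prob_cols_wr S (fun A : 'M[R]_(m, k) => sparse A b)
  = prob_rows_wr S^T (fun A : 'M[R]_(k, m) => sparse A b).
Proof.
rewrite /prob_cols_wr /prob_rows_wr; congr (_%:R / _).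
by apply: eq_card => f; rewrite !inE sparse_colsub.
Qed.

Lemma prob_cols_wor_sparse (R : numFieldType) m n k (S : 'M[R]_(m, n)) (b : R) :
  prob_cols_wor S (fun A : 'M[R]_(m, k) => sparse A b)
  = prob_rows_wor S^T (fun A : 'M[R]_(k, m) => sparse A b).
Proof.
rewrite /prob_cols_wor /prob_rows_wor; congr (_%:R / _).
by apply: eq_card => f; rewrite !inE sparse_colsub.
Qed.

Theorem proposition4p5 (R : realType) (m n : nat) (S : 'M[R]_(m, n))
  (alpha : R) (r : nat) :
  (0 < m)%N -> (0 < n)%N -> (0 < r)%N -> sparse S alpha ->
  (* 1. with replacement *)
  ((forall (c : R) (k : nat), 16 / (3 * alpha * r%:R) <= c ->
      k%:R = c * r%:R * ln n%:R ->
      1 - n%:R^-1 <= prob_rows_wr S (fun A : 'M[R]_(k, n) => sparse A (2 * alpha)))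
   /\
   (forall (c : R) (k : nat), 16 / (3 * alpha * r%:R) <= c ->
      k%:R = c * r%:R * ln m%:R ->
      1 - m%:R^-1 <= prob_cols_wr S (fun A : 'M[R]_(m, k) => sparse A (2 * alpha))))
  /\
  (* 2. without replacement *)
  ((forall (c : R) (k : nat), 8 / (alpha * r%:R) <= c ->
      k%:R = c * r%:R * ln n%:R -> (k <= m)%N ->
      1 - 2 * n%:R^-1 <= prob_rows_wor S (fun A : 'M[R]_(k, n) => sparse A (2 * alpha)))
   /\
   (forall (c : R) (k : nat), 8 / (alpha * r%:R) <= c ->
      k%:R = c * r%:R * ln m%:R -> (k <= n)%N ->
      1 - 2 * m%:R^-1 <= prob_cols_wor S (fun A : 'M[R]_(m, k) => sparse A (2 * alpha)))).
Proof.
move=> m_gt0 n_gt0 r_gt0 Ssp; have SspT : sparse S^T alpha by rewrite sparse_trmx.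
have size_wr p k c : (0 < p)%N -> 16 / (3 * alpha * r%:R) <= c ->
    k%:R = c * r%:R * ln p%:R -> 0 < alpha -> 16 / 3 * ln p%:R <= alpha * k%:R.
  move=> p_gt0 + hk alpha_gt0; rewrite -mulrA invfM mulrA => hc.
  exact: mul_ln_le_sample_size hc hk.
have size_wor p k c : (0 < p)%N -> 8 / (alpha * r%:R) <= c ->
    k%:R = c * r%:R * ln p%:R -> 0 < alpha -> 16 / 3 * ln p%:R <= alpha * k%:R.
  move=> p_gt0 hc hk alpha_gt0; apply: le_trans (mul_ln_le_sample_size _ _ _ hc hk) => //.
  by rewrite ler_wpM2r ?ln_ge0 ?ler1n //; lra.
have loosen p : 1 - 2 * p%:R^-1 <= 1 - p%:R^-1 :> R.
  by rewrite lerD2l lerN2 ler_peMl ?invr_ge0 ?ler1n.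
split; split=> c k hc hk.
- exact: prob_rows_wr_sparse_ge m_gt0 n_gt0 Ssp (size_wr n k c n_gt0 hc hk).
- rewrite prob_cols_wr_sparse.
  exact: prob_rows_wr_sparse_ge n_gt0 m_gt0 SspT (size_wr m k c m_gt0 hc hk).
- move=> km; apply: le_trans (loosen n) _.
  exact: prob_rows_wor_sparse_ge km m_gt0 n_gt0 Ssp (size_wor n k c n_gt0 hc hk).
- move=> kn; apply: le_trans (loosen m) _; rewrite prob_cols_wor_sparse.
  exact: prob_rows_wor_sparse_ge kn n_gt0 m_gt0 SspT (size_wor m k c m_gt0 hc hk).
Qed.
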